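(* Let $q$ be a prime power, $s,\ell$ positive integers, $\alpha,\beta\in\{1,-1\}\subseteq\mathbb{F}_q$, $r$ the multiplicative order of $\beta$, and assume $q\equiv 1\pmod{r\ell}$. Let $\omega\in\mathbb{F}_q$ be a primitive $r\ell$-th root of unity with $\omega^\ell=\beta$, and $\eta_k(y)=\prod_{j\ne k,\,0\le j\le \ell-1}\frac{y-\omega^{1+jr}}{\omega^{1+kr}-\omega^{1+jr}}$ for $0\le k\le\ell-1$. Let $\mathcal{C}$ be an ideal of $\mathcal{R}=\mathbb{F}_q[x,y]/\langle x^s-\alpha,y^\ell-\beta\rangle$; for each $j$ let $p_j(x)$ be the monic divisor of $x^s-\alpha$ generating $I_j=\{f(x)\in\mathbb{F}_q[x]/\langle x^s-\alpha\rangle:\eta_j(y)f(x)\in\mathcal{C}\}$, $a_j=\deg p_j(x)$, and $p_j'(x)=(x^s-\alpha)/p_j(x)$. Then $\mathcal{C}$ is self-dual if and only if (i) $s\ell=2(a_0+a_1+\cdots+a_{\ell-1})$, and (ii) for every $k$, $0\le k\le \ell-1$, there exist nonzero polynomials $t_k(x),t_k'(x)\in\mathbb{F}_q[x]/\langle x^s-\alpha\rangle$ such that, in $\mathbb{F}_q[x]/\langle x^s-\alpha\rangle$, if $\beta=1$: $p_k'^*(x)=t_k(x)p_{\ell-2-k}(x)$ and $p_k(x)=t_k'(x)p'^*_{\ell-2-k}(x)$; if $\beta=-1$: $p_k'^*(x)=t_k(x)p_{\ell-1-k}(x)$ and $p_k(x)=t_k'(x)p'^*_{\ell-1-k}(x)$;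 where subscripts are read modulo $\ell$.
   Context: Elements of $\mathcal{R}$ are identified with vectors $(c_{i,j})$ of length $s\ell$ via the coefficients of $x^iy^j$ ($0\le i\le s-1$, $0\le j\le \ell-1$); ideals of $\mathcal{R}$ are two-dimensional $(\alpha,\beta)$-constacyclic codes. $\mathcal{C}^\perp$ denotes the Euclidean dual, and $\mathcal{C}$ is self-dual if $\mathcal{C}=\mathcal{C}^\perp$. For a nonzero polynomial $f$ of degree $k$, $f^*(x)=x^kf(1/x)$. *)

From HB Require Import structures.
From mathcomp Require Import all_boot all_order all_algebra.
Set Implicit Arguments. Unset Strict Implicit. Unset Printing Implicit Defensive.
Import Order.TTheory GRing.Theory.
Local Open Scope ring_scope.

Section TwoDimConstacyclic.
Variables (F : finFieldType) (s l : nat) (a b : F).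

Definition modx : {poly F} := 'X^s - a%:P.

(* Elements of R = F[x,y]/<x^s - a, y^l - b> are represented by their
   coefficient matrices (c_{i,j}), 0 <= i < s, 0 <= j < l (coefficient of x^i y^j).
   Bivariate polynomials are {poly {poly F}}: outer variable y, inner variable x. *)
Definition to_bipoly (c : 'M[F]_(s, l)) : {poly {poly F}} :=
  \sum_(i < s) \sum_(j < l) ((c i j)%:P * 'X^i)%:P * 'X^j.

Definition of_bipoly (P : {poly {poly F}}) : 'M[F]_(s, l) :=
  \matrix_(i < s, j < l) (P`_j)`_i.

Definition reduceR (P : {poly {poly F}}) : {poly {poly F}} :=
  map_poly (fun q : {poly F} => q %% modx) (P %% ('X^l - (b%:P)%:P)).

Definition Rmul (c d : 'M[F]_(s, l)) : 'M[F]_(s, l) :=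
  of_bipoly (reduceR (to_bipoly c * to_bipoly d)).

Definition elemR (f g : {poly F}) : 'M[F]_(s, l) :=
  of_bipoly (reduceR (f%:P * map_poly polyC g)).

(* Ideals of R (= two-dimensional (a,b)-constacyclic codes). *)
Definition is_ideal (C : {set 'M[F]_(s, l)}) : Prop :=
  [/\ 0 \in C,
      (forall c d, c \in C -> d \in C -> c + d \in C) &
      (forall r c, c \in C -> Rmul r c \in C)].

Definition dual (C : {set 'M[F]_(s, l)}) : {set 'M[F]_(s, l)} :=
  [set v : 'M[F]_(s, l) | [forall c in C, \sum_(i < s) \sum_(j < l) c i j * v i j == 0]].

Definition self_dual (C : {set 'M[F]_(s, l)}) : Prop := C = dual C.

End TwoDimConstacyclic.

Definition eta_poly (F : fieldType) (l r : nat) (w : F) (k : nat) : {poly F} :=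
  \prod_(j < l | j != k :> nat)
     (('X - (w ^+ (1 + j * r))%:P) *
      ((w ^+ (1 + k * r) - w ^+ (1 + j * r))^-1)%:P).

Definition recip (F : fieldType) (f : {poly F}) : {poly F} := Poly (rev f).

(** The elements lam k = w^(1+kr), k < l, are the l distinct roots of y^l - b,
    so the evaluations phi k : c |-> c(x, lam k) identify R with a product of l
    copies of F[x]/(x^s - a); C corresponds to the components (p k), which the
    Lagrange idempotents eta k pick out.  Orthogonality of the powers of the
    lam k turns the Euclidean form into
      l * <c, v> = sum_k <phi k c, phi k' v>     with lam k * lam k' = 1,
    where <u, h> is the coefficient of x^(s-1) in u * x^(s-1) h(1/x) modulo
    x^s - a.  As #|F| = 1 mod rl, l is invertible in F, and since a^2 = 1 the
    reciprocal of a divisor of x^s - a again divides it; hence v lies in the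
    dual iff recip ((x^s - a) / p k') divides phi k v for all k.  So C is
    self-dual iff p k and recip ((x^s - a) / p k') are associate for every k,
    which gives the degree count and the divisibility conditions. *)

From HB Require Import structures.
From mathcomp Require Import all_boot all_order all_algebra zify.
From mathcomp Require Import fingroup cyclic.
Set Implicit Arguments.
Unset Strict Implicit.
Unset Printing Implicit Defensive.
Import Order.TTheory GRing.Theory.
Local Open Scope ring_scope.

Section Reversal.
Variable R : idomainType.
Implicit Types f g h : {poly R}.

(* For size h <= n, [revn n h] is x^(n-1) h(1/x). *)
Definition revn n h : {poly R} := \poly_(i < n) h`_(n.-1 - i).

Lemma coef_revn n h i : (revn n h)`_i = if (i < n)%N then h`_(n.-1 - i) else 0.
Proof. exact: coef_poly. Qed.

Lemma size_revn n h : (size (revn n h) <= n)%N.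
Proof. exact: size_poly. Qed.

Lemma revnK n h : (size h <= n)%N -> revn n (revn n h) = h.
Proof.
move=> hn; apply/polyP => i; rewrite !coef_revn.
case: ltnP => hi; last by rewrite nth_default // (leq_trans hn).
have -> : (n.-1 - i < n)%N by lia.
by rewrite subKn //; lia.
Qed.

Lemma revn_is_linear n : linear (revn n).
Proof.
move=> c f g; apply/polyP => i.
by rewrite coefD coefZ !coef_revn coefD coefZ; case: ifP; rewrite ?mulr0 ?addr0.
Qed.

HB.instance Definition _ n :=
  GRing.isLinear.Build R {poly R} {poly R} _ (revn n) (revn_is_linear n).

Lemma revn0 n : revn n 0 = 0.
Proof. exact: linear0. Qed.

Lemma revnXn n i : (i < n)%N -> revn n 'X^i = 'X^(n.-1 - i).
Proof.
move=> hi; apply/polyP => k; rewrite coef_revn !coefXn.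
case: ltnP => hk; first by congr (_%:R); apply/eqP/eqP; lia.
by rewrite (_ : (k == _) = false) //; apply/eqP; lia.
Qed.

Lemma poly_sumZXn n f : (size f <= n)%N -> f = \sum_(i < n) f`_i *: 'X^i.
Proof. by move=> hf; rewrite -poly_def -/(take_poly n f) take_poly_id. Qed.

Lemma revn_sumZXn n f : (size f <= n)%N ->
  revn n f = \sum_(i < n) f`_i *: 'X^(n.-1 - i).
Proof.
move=> hf; rewrite {1}(poly_sumZXn hf) linear_sum; apply: eq_bigr => i _.
by rewrite linearZ /=; congr (_ *: _); apply: revnXn.
Qed.

Lemma revnM n k f g : (size f <= n)%N -> (size g <= k)%N ->
  revn (n + k).-1 (f * g) = revn n f * revn k g.
Proof.
move=> hf hg; rewrite (revn_sumZXn hf) (revn_sumZXn hg).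
rewrite {1}(poly_sumZXn hf) {1}(poly_sumZXn hg) !big_distrl linear_sum /=.
apply: eq_bigr => i _; rewrite !big_distrr linear_sum /=; apply: eq_bigr => j _.
have [hi hj] := (ltn_ord i, ltn_ord j).
rewrite -scalerAl -scalerAr -scalerAl -scalerAr !linearZ -!exprD /=.
rewrite scalerA [RHS]scalerA (mulrC g`_j); congr (_ *: _).
have -> : (n.-1 - i + (k.-1 - j) = (n + k).-1.-1 - (i + j))%N by lia.
by apply: revnXn; lia.
Qed.

Lemma dvdp_revn k u h : (size h <= k)%N -> u %| h -> revn (size u) u %| revn k h.
Proof.
move=> hk /Pdiv.Idomain.dvdpP [[c q] /= c0 Ecq].
rewrite -(dvdpZr _ _ c0) -linearZ /= Ecq; rewrite -(size_scale _ c0) Ecq in hk.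
have [->|q0] := eqVneq q 0; first by rewrite mul0r revn0 dvdp0.
have [->|u0] := eqVneq u 0; first by rewrite mulr0 !revn0 dvdpp.
rewrite size_mul // in hk.
have hq : (0 < size q)%N by rewrite size_poly_gt0.
have hu : (0 < size u)%N by rewrite size_poly_gt0.
have -> : k = (size u + (k.+1 - size u)).-1 by lia.
by rewrite mulrC revnM ?dvdp_mulIl //; lia.
Qed.

End Reversal.

Lemma recip_revn (F : fieldType) (f : {poly F}) : recip f = revn (size f) f.
Proof.
apply/polyP => i; rewrite coef_revn coef_Poly.
case: ltnP => hi; last by rewrite nth_default // size_rev.
by rewrite nth_rev // subnS -!subn1 subnAC.
Qed.

Lemma size_recip (F : fieldType) (f : {poly F}) : f`_0 != 0 -> size (recip f) = size f.
Proof. by move=> f0; rewrite recip_revn size_poly_eq // subnn. Qed.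

Section Modulus.
Variables (F : finFieldType) (s : nat) (a : F).
Hypothesis s_gt0 : (0 < s)%N.
Local Notation m := (modx s a).
Implicit Types u h W : {poly F}.

Lemma size_modx : size m = s.+1.
Proof. exact: size_XnsubC. Qed.

Lemma modx_neq0 : m != 0.
Proof. by rewrite -size_poly_gt0 size_modx. Qed.

Lemma size_modp_modx u : (size (u %% m)%R <= s)%N.
Proof. by rewrite -ltnS -size_modx ltn_modp modx_neq0. Qed.

Definition dotp u h : F := \sum_(i < s) u`_i * h`_i.

Lemma dotp_modx u h : (size u <= s)%N -> (size h <= s)%N ->
  dotp u h = ((u * revn s h) %% m)`_s.-1.
Proof.
move=> hu hh; set W := u * revn s h.
have sW : (size W <= (s + s).-1)%N.
  apply: (leq_trans (size_polyMleq _ _)).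
  by move: hu (size_revn s h); move: (size u) (size (revn s h)) => x y; lia.
have sQ : (size (W %/ m)%R <= s.-1)%N.
  by rewrite size_divp ?modx_neq0 // size_modx; move: sW; move: (size W) => x; lia.
(* The quotient by x^s - a has degree < s - 1, so reduction keeps this coefficient. *)
have -> : (W %% m)`_s.-1 = W`_s.-1.
  rewrite [in RHS](divp_eq W m) coefD /modx mulrBr coefB coefMXn ltn_predL s_gt0.
  by rewrite mulrC coefCM [(W %/ m)`_ _]nth_default // mulr0 subrr add0r.
rewrite /W coefM prednK // /dotp; apply: eq_bigr => j _.
rewrite coef_revn ifT; last by lia.
by congr (_ * h`_ _); have := ltn_ord j; lia.
Qed.

Lemma modx_nondeg W : (forall g, ((g * W) %% m)`_s.-1 = 0) -> W %% m = 0.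
Proof.
move=> hW; apply/eqP; apply: contraT => z0.
set z := W %% m; set i := (size z).-1.
have zi : z`_i != 0 by rewrite -lead_coefE lead_coef_eq0.
have zs : (0 < size z)%N by rewrite size_poly_gt0.
have hi : (i < s)%N by move: (size_modp_modx W); rewrite /i -/z; lia.
(* Multiplying by x^(s-1-i) moves the leading coefficient of z to x^(s-1). *)
have := hW 'X^(s.-1 - i); rewrite -modp_mul -/z mulrC modp_small; last first.
  rewrite size_modx ltnS; apply: (leq_trans (size_polyMleq _ _)); rewrite size_polyXn.
  by move: hi zs; rewrite /i; move: (size z) => n; lia.
rewrite coefMXn ltnNge leq_subr /= subKn; last by move: hi; clear; lia.
by move/eqP; rewrite (negbTE zi).
Qed.

Hypothesis a_sq : a * a = 1.

Lemma coef0_dvdp_modx u : u %| m -> u`_0 != 0.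
Proof.
move=> /divpK mE; apply: contra_eqN a_sq => /eqP u0.
have : m.[0] = 0 by rewrite -mE hornerM [u.[0]]horner_coef0 u0 mulr0.
rewrite /modx !hornerE expr0n eqn0Ngt s_gt0 /= sub0r => /eqP; rewrite oppr_eq0 => /eqP ->.
by rewrite mul0r eq_sym oner_eq0.
Qed.

Lemma revn_modx : revn s.+1 m = - a *: m.
Proof.
have aE : a%:P = a *: 'X^0 by rewrite expr0 alg_polyC.
rewrite /modx aE linearB linearZ /= !revnXn // subn0 subnn expr0.
by rewrite scalerBr scalerA mulNr a_sq scaleN1r opprK scaleNr addrC.
Qed.

Lemma recip_dvdp_modx u : u %| m -> recip u %| m.
Proof.
move=> um; have := dvdp_revn (eq_leq size_modx) um.
rewrite revn_modx dvdpZr -?recip_revn // oppr_eq0.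
by apply: contra_eqN a_sq => /eqP ->; rewrite mul0r eq_sym oner_eq0.
Qed.

Lemma dvdp_revn_recip d h : d %| m -> (size h <= s)%N ->
  (d %| revn s h) = (recip d %| h).
Proof.
move=> dm hs; apply/idP/idP.
  by move/(dvdp_revn (size_revn s h)); rewrite (revnK hs) -recip_revn.
have sr : size (recip d) = size d by rewrite size_recip ?coef0_dvdp_modx.
by move/(dvdp_revn hs); rewrite sr recip_revn (revnK (leqnn _)).
Qed.

End Modulus.

Lemma coef_sumZXn (R : nzRingType) n (x : 'I_n -> R) (k : 'I_n) :
  (\sum_(i < n) x i *: 'X^i)`_k = x k.
Proof.
rewrite coef_sum (bigD1 k) //= coefZ coefXn eqxx mulr1 big1 ?addr0 // => i ik.
by rewrite coefZ coefXn -[(k == i :> nat)]/(k == i) eq_sym (negbTE ik) mulr0.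
Qed.

Lemma size_sumZXn (R : nzRingType) n (x : 'I_n -> R) :
  (size (\sum_(i < n) x i *: 'X^i)%R <= n)%N.
Proof.
apply: (leq_trans (size_sum _ _ _)); apply/bigmax_leqP => i _.
by apply: (leq_trans (size_scale_leq _ _)); rewrite size_polyXn.
Qed.

Lemma horner_modp_monic_root (R : idomainType) (d p : {poly R}) x :
  d \is monic -> root d x -> (p %% d).[x] = p.[x].
Proof.
move=> dm /eqP dx.
by rewrite [in RHS](Pdiv.IdomainMonic.divp_eq dm p) hornerD hornerM dx mulr0 add0r.
Qed.

Lemma horner_map_modp (F : fieldType) (d x : {poly F}) (P : {poly {poly F}}) :
  (map_poly (fun q => q %% d) P).[x] %% d = P.[x] %% d.
Proof.
have modp_sum (I : finType) (G : I -> {poly F}) : (\sum_i G i) %% d = \sum_i (G i %% d).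
  exact: (big_morph _ (modpD d) (mod0p d)).
have sM : (size (map_poly (fun q => q %% d) P)%R <= size P)%N by exact: size_poly.
rewrite (horner_coef_wide _ sM) (horner_coef_wide _ (leqnn (size P))).
rewrite !modp_sum; apply: eq_bigr => i _.
by rewrite coef_map_id0 ?mod0p // mulrC modp_mul mulrC.
Qed.

Section Evaluation.
Variables (F : finFieldType) (s l : nat) (a b : F).
Hypotheses (s_gt0 : (0 < s)%N) (l_gt0 : (0 < l)%N).
Local Notation m := (modx s a).
Implicit Types (c d : 'M[F]_(s, l)) (P : {poly {poly F}}).

Lemma to_bipolyE c : to_bipoly c = \sum_(j < l) (\sum_(i < s) c i j *: 'X^i) *: 'X^j.
Proof.
rewrite /to_bipoly exchange_big /=; apply: eq_bigr => j _.
by rewrite scaler_suml; apply: eq_bigr => i _; rewrite !mul_polyC.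
Qed.

Lemma to_of_bipoly P : (size P <= l)%N -> (forall j, (size (P`_j)%R <= s)%N) ->
  to_bipoly (of_bipoly s l P) = P.
Proof.
move=> hP hPj; apply/polyP => j; rewrite to_bipolyE.
case: (ltnP j l) => jl; last first.
  by rewrite !nth_default // (leq_trans _ jl) ?size_sumZXn.
rewrite (coef_sumZXn _ (Ordinal jl)) [RHS](poly_sumZXn (hPj j)).
by apply: eq_bigr => i _; rewrite mxE.
Qed.

Definition evalR (z : F) c : {poly F} := (to_bipoly c).[z%:P].

Lemma evalRE z c : evalR z c = \sum_(i < s) (\sum_(j < l) c i j * z ^+ j) *: 'X^i.
Proof.
rewrite /evalR /to_bipoly horner_sum; apply: eq_bigr => i _.
rewrite horner_sum scaler_suml; apply: eq_bigr => j _.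
by rewrite hornerM hornerXn hornerC -rmorphXn /= -mul_polyC polyCM mulrAC.
Qed.

Lemma coef_evalR z c (i : 'I_s) : (evalR z c)`_i = \sum_(j < l) c i j * z ^+ j.
Proof. by rewrite evalRE coef_sumZXn. Qed.

Lemma size_evalR z c : (size (evalR z c) <= s)%N.
Proof. by rewrite evalRE size_sumZXn. Qed.

Lemma evalR_is_linear z : linear (evalR z).
Proof.
move=> k c d; rewrite !evalRE scaler_sumr -big_split; apply: eq_bigr => i _ /=.
rewrite scalerA -scalerDl mulr_sumr -big_split; congr (_ *: _); apply: eq_bigr => j _ /=.
by rewrite !mxE mulrDl mulrA.
Qed.

HB.instance Definition _ z :=
  GRing.isLinear.Build F 'M[F]_(s, l) {poly F} _ (evalR z) (evalR_is_linear z).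

Variable z : F.
Hypothesis zl : z ^+ l = b.

Lemma evalR_reduce P : evalR z (of_bipoly s l (reduceR s l a b P)) = P.[z%:P] %% m.
Proof.
set d : {poly {poly F}} := 'X^l - (b%:P)%:P.
have dm : d \is monic by exact: monicXnsubC.
set Q := map_poly (fun q => q %% m) (P %% d).
have sQ : (size Q <= l)%N.
  have sQd : (size Q <= size (P %% d)%R)%N by exact: size_poly.
  by rewrite (leq_trans sQd) // -ltnS -(size_XnsubC (b%:P) l_gt0) ltn_modpN0 ?monic_neq0.
have sQj j : (size (Q`_j)%R <= s)%N by rewrite coef_map_id0 ?mod0p ?size_modp_modx.
rewrite /reduceR -/d -/Q /evalR to_of_bipoly //.
rewrite -(modp_small (_ : size (Q.[z%:P])%R < size m)%N).
  by rewrite horner_map_modp horner_modp_monic_root // /root /d !hornerE -rmorphXn /= zl subrr.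
by rewrite size_modx // ltnS -[Q](to_of_bipoly sQ sQj) size_evalR.
Qed.

Lemma evalR_Rmul c d : evalR z (Rmul a b c d) = (evalR z c * evalR z d) %% m.
Proof. by rewrite /Rmul evalR_reduce hornerM. Qed.

Lemma evalR_elemR f g : evalR z (elemR s l a b f g) = (f * g.[z]%:P) %% m.
Proof. by rewrite /elemR evalR_reduce hornerCM (horner_map polyC). Qed.

End Evaluation.

Lemma sum_expr_root_neq1 (R : idomainType) n (z : R) :
  z ^+ n = 1 -> z != 1 -> \sum_(k < n) z ^+ k = 0.
Proof.
move=> zn z1; apply/eqP; have /eqP := subrX1 z n.
by rewrite zn subrr eq_sym mulf_eq0 subr_eq0 (negbTE z1).
Qed.

Section Roots.
Variables (F : fieldType) (l r : nat) (b w : F).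
Hypotheses (l_gt0 : (0 < l)%N) (b_pm1 : b = 1 \/ b = -1).
Hypotheses (b_prim : r.-primitive_root b) (w_prim : (r * l).-primitive_root w).
Hypothesis wl : w ^+ l = b.

Definition lam k : F := w ^+ (1 + k * r).

Lemma lam_inj k1 k2 : (k1 < l)%N -> (k2 < l)%N -> lam k1 = lam k2 -> k1 = k2.
Proof.
move=> h1 h2 /eqP; rewrite /lam (eq_prim_root_expr w_prim) eqn_modDl.
rewrite (mulnC r l) -!muln_modl eqn_pmul2r ?(prim_order_gt0 b_prim) // !modn_small //.
by move/eqP.
Qed.

Lemma lamXl k : lam k ^+ l = b.
Proof.
rewrite /lam -exprM mulnDl mul1n exprD wl [(k * r)%N]mulnC mulnAC exprM.
by rewrite (prim_expr_order w_prim) expr1n mulr1.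
Qed.

Lemma eta_poly_lam k i : (k < l)%N -> (i < l)%N ->
  (eta_poly l r w k).[lam i] = (i == k)%:R.
Proof.
move=> hk hi; rewrite /eta_poly horner_prod.
have [->|ik] := eqVneq i k.
  rewrite big1 // => j jk; rewrite hornerM hornerXsubC hornerC divff //.
  rewrite subr_eq0; apply: contra jk => /eqP /lam_inj E.
  by apply/eqP; rewrite E.
rewrite (bigD1 (Ordinal hi)) /=; last by [].
by rewrite hornerM hornerXsubC hornerC subrr !mul0r.
Qed.

Lemma b_sq : b * b = 1.
Proof. by case: b_pm1 => ->; rewrite ?mulrNN mulr1. Qed.

Lemma order_pm1 : r = if b == 1 then 1%N else 2%N.
Proof.
have r_gt0 := prim_order_gt0 b_prim.
have [b1|b1] := eqVneq b 1.
  by apply/eqP; rewrite -dvdn1 (prim_order_dvd b_prim) expr1 b1.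
have d2 : (r %| 2)%N by rewrite (prim_order_dvd b_prim) expr2 b_sq.
have r1 : r != 1%N by apply: contra b1 => /eqP r1; rewrite -[b]expr1 -r1 prim_expr_order.
by have := dvdn_leq (isT : (0 < 2)%N) d2; clear -r_gt0 r1; lia.
Qed.

(* The index k' of the statement; see [lam_kinv]. *)
Definition kinv k : nat :=
  if b == 1 then ((2 * l - 2 - k) %% l)%N else ((l - 1 - k) %% l)%N.

Lemma kinv_lt k : (kinv k < l)%N.
Proof. by rewrite /kinv; case: ifP => _; rewrite ltn_pmod. Qed.

Lemma lam_kinv k : (k < l)%N -> lam k * lam (kinv k) = 1.
Proof.
move=> hk; rewrite /lam -exprD; apply/eqP; rewrite -(prim_order_dvd w_prim).
rewrite order_pm1 /kinv; case: (b == 1).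
  rewrite !muln1 mul1n (_ : 1 + k + _ = k.+2 + (2 * l - 2 - k) %% l)%N; last by lia.
  by rewrite /dvdn modnDmr (_ : k.+2 + _ = 2 * l)%N ?modnMl //; lia.
by rewrite modn_small; [have -> : (1 + k * 2 + (1 + (l - 1 - k) * 2) = 2 * l)%N by lia | lia].
Qed.

Lemma kinvK k : (k < l)%N -> kinv (kinv k) = k.
Proof.
move=> hk; apply: lam_inj => //; first exact: kinv_lt.
have h1 := lam_kinv hk; have h2 := lam_kinv (kinv_lt k).
by rewrite -[lam k]mulr1 -h2 mulrA h1 mul1r.
Qed.

Lemma sum_lam_kinv j j' : (j < l)%N -> (j' < l)%N ->
  \sum_(k < l) lam k ^+ j * lam (kinv k) ^+ j' = if j == j' then l%:R else 0.
Proof.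
move=> hj hj'; set e := (j + (l - j'))%N.
have termE (k : 'I_l) : lam k ^+ j * lam (kinv k) ^+ j' = b * w ^+ e * (w ^+ (r * e)) ^+ k.
  have -> : lam (kinv k) ^+ j' = lam k ^+ (l - j') * b.
    rewrite -[lam (kinv k) ^+ j']mulr1 -(expr1n _ (l - j')) -(lam_kinv (ltn_ord k)).
    by rewrite exprMn mulrCA -exprD subnKC ?(ltnW hj') // lamXl.
  rewrite mulrA -exprD -/e mulrC -mulrA; congr (_ * _).
  by rewrite /lam -!exprM -exprD; congr (_ ^+ _); lia.
rewrite (eq_bigr _ (fun k _ => termE k)) -big_distrr /=.
have [jj'|jj'] := eqVneq j j'.
  have -> : e = l by rewrite /e jj' subnKC // ltnW.
  under eq_bigr do rewrite (prim_expr_order w_prim) expr1n.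
  by rewrite sumr_const card_ord wl b_sq mul1r.
rewrite sum_expr_root_neq1 ?mulr0 //.
  by rewrite -exprM mulnAC exprM (prim_expr_order w_prim) expr1n.
rewrite -(prim_order_dvd w_prim) dvdn_pmul2l ?(prim_order_gt0 b_prim) //.
apply/negP => /dvdnP [q eE]; rewrite /e in eE.
have q_lt2 : (q < 2)%N by rewrite -(ltn_pmul2r l_gt0); lia.
have q_gt0 : (0 < q)%N by rewrite -(ltn_pmul2r l_gt0); lia.
by move: eE; rewrite (_ : q = 1%N) ?mul1n; lia.
Qed.

End Roots.

Lemma natr_card (R : finNzRingType) : #|R|%:R = 0 :> R.
Proof. by rewrite -FinRing.zmodXgE -cardsT expg_cardG ?inE. Qed.

Lemma double_sum_complementary n (f : 'I_n -> 'I_n) (x : 'I_n -> nat) c :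
  injective f -> (forall k, x k + x (f k) = c)%N -> (2 * \sum_(k < n) x k = c * n)%N.
Proof.
move=> f_inj xc; rewrite mul2n -addnn {2}(reindex_inj f_inj) -big_split /=.
by rewrite (eq_bigr _ (fun k _ => xc k)) sum_nat_const card_ord mulnC.
Qed.

Section SelfDualCodes.
Variables (F : finFieldType) (s l r : nat) (a b w : F).
Hypotheses (s_gt0 : (0 < s)%N) (l_gt0 : (0 < l)%N) (a_sq : a * a = 1).
Hypotheses (b_pm1 : b = 1 \/ b = -1) (b_prim : r.-primitive_root b).
Hypotheses (w_prim : (r * l).-primitive_root w) (wl : w ^+ l = b).
Hypothesis card_F : #|F| = 1 %[mod r * l].

Local Notation m := (modx s a).
Local Notation lam := (lam r w).
Local Notation kinv := (kinv l b).
Local Notation phi k := (evalR (lam k)).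
Local Notation elemR := (elemR s l a b).
Local Notation eta k := (eta_poly l r w k).
Implicit Types c v : 'M[F]_(s, l).

Lemma l_neq0 : l%:R != 0 :> F.
Proof.
have [rl_le1|rl_gt1] := leqP (r * l) 1.
  by rewrite (_ : l = 1%N) ?oner_neq0 //; have := prim_order_gt0 b_prim; nia.
apply/eqP => l0; have /eqP := natr_card F.
by rewrite (divn_eq #|F| (r * l)) card_F modn_small // natrD !natrM l0 !mulr0 add0r oner_eq0.
Qed.

Lemma phi_inj c : (forall k, (k < l)%N -> phi k c = 0) -> c = 0.
Proof.
move=> c0; apply/matrixP => i j; rewrite mxE.
set P := \sum_(j < l) c i j *: ('X^j : {poly F}).
have -> : c i j = P`_j by rewrite coef_sumZXn.
suff -> : P = 0 by rewrite coef0.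
apply: (@roots_geq_poly_eq0 _ _ [seq lam k | k <- iota 0 l]).
- apply/allP => x /mapP [k]; rewrite mem_iota add0n => /andP [_ hk] ->.
  rewrite /root /P horner_sum; apply/eqP.
  rewrite [RHS](_ : _ = (phi k c)`_i); last by rewrite c0 ?coef0.
  rewrite coef_evalR.
  by apply: eq_bigr => j' _; rewrite hornerZ hornerXn.
- rewrite map_inj_in_uniq ?iota_uniq // => x y; rewrite !mem_iota !add0n.
  by move=> /andP [_ hx] /andP [_ hy]; apply: (lam_inj b_prim w_prim).
by rewrite size_map size_iota size_sumZXn.
Qed.

Lemma phi_ext c v : (forall k, (k < l)%N -> phi k c = phi k v) -> c = v.
Proof.
move=> cv; apply/eqP; rewrite -subr_eq0; apply/eqP/phi_inj => k hk.
by rewrite linearB /= cv // subrr.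
Qed.

Lemma euclid_pairing c v : l%:R * (\sum_(i < s) \sum_(j < l) c i j * v i j) =
  \sum_(k < l) dotp s (phi k c) (phi (kinv k) v).
Proof.
rewrite /dotp [RHS]exchange_big /= mulr_sumr; apply: eq_bigr => i _; apply/esym.
under eq_bigr do rewrite !coef_evalR big_distrl /=.
under eq_bigr do under eq_bigr do rewrite big_distrr /=.
rewrite exchange_big /= mulr_sumr; apply: eq_bigr => j _; rewrite exchange_big /=.
have orth (j' : 'I_l) : \sum_(k < l) c i j * lam k ^+ j * (v i j' * lam (kinv k) ^+ j') =
    c i j * v i j' * (if j == j' then l%:R else 0).
  rewrite -(sum_lam_kinv l_gt0 b_pm1 b_prim w_prim wl (ltn_ord j) (ltn_ord j')) mulr_sumr.
  by apply: eq_bigr => k _; rewrite mulrACA.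
rewrite (eq_bigr _ (fun j' _ => orth j')) (bigD1 j) //= eqxx big1 ?addr0.
  by rewrite mulrC.
by move=> j' ne; rewrite ifF ?mulr0 //; apply/negbTE; rewrite eq_sym.
Qed.

Let lam_root k : lam k ^+ l = b := lamXl w_prim wl k.
Let kinv_ltl k : (kinv k < l)%N := kinv_lt b l_gt0 k.
Let kinv_invol k (hk : (k < l)%N) : kinv (kinv k) = k := kinvK l_gt0 b_pm1 b_prim w_prim hk.

Lemma phi_elemR_eta j k (f : {poly F}) : (j < l)%N -> (k < l)%N -> (size f <= s)%N ->
  phi j (elemR f (eta k)) = if j == k then f else 0.
Proof.
move=> hj hk hf; rewrite (evalR_elemR a s_gt0 l_gt0 (lam_root j)).
rewrite (eta_poly_lam b_prim w_prim) //; case: eqP => _; last by rewrite mulr0 mod0p.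
by rewrite mulr1 modp_small // size_modx // ltnS.
Qed.

Lemma Rmul_elemR1_eta k c : (k < l)%N ->
  Rmul a b (elemR 1 (eta k)) c = elemR (phi k c) (eta k).
Proof.
move=> hk; apply: phi_ext => j hj; rewrite (evalR_Rmul a s_gt0 l_gt0 (lam_root j)).
rewrite !phi_elemR_eta ?size_poly1 ?size_evalR //.
case: eqP => [->|_]; last by rewrite mul0r mod0p.
by rewrite mul1r modp_small // size_modx // ltnS size_evalR.
Qed.

Lemma elemR_decomposition c : c = \sum_(k < l) elemR (phi k c) (eta k).
Proof.
apply: phi_ext => j hj; rewrite linear_sum /= (bigD1 (Ordinal hj)) //= big1 => [|k].
  by rewrite phi_elemR_eta ?size_evalR // eqxx addr0.
rewrite phi_elemR_eta ?size_evalR // -val_eqE eq_sym => /negbTE -> //.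
Qed.

Variables (C : {set 'M[F]_(s, l)}) (p : nat -> {poly F}).
Hypothesis C_ideal : is_ideal a b C.
Hypothesis C_components : forall j, (j < l)%N ->
  [/\ p j \is monic, p j %| m &
      forall f : {poly F}, (size f <= s)%N ->
        (elemR f (eta j) \in C <-> exists g : {poly F}, f = (g * p j) %% m)].

Lemma p_dvd_modx k : (k < l)%N -> p k %| m.
Proof. by case/C_components. Qed.

Lemma p_neq0 k : (k < l)%N -> p k != 0.
Proof. by case/C_components => /monic_neq0. Qed.

Lemma elemR_eta_mem k (f : {poly F}) : (k < l)%N -> (size f <= s)%N -> p k %| f ->
  elemR f (eta k) \in C.
Proof.
move=> hk hf pf; have [_ _ -> //] := C_components hk.
by exists (f %/ p k); rewrite divpK // modp_small // size_modx // ltnS.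
Qed.

Lemma mem_code c : c \in C <-> (forall k, (k < l)%N -> p k %| phi k c).
Proof.
have [C0 CD CM] := C_ideal; split => [cC k hk | pc].
  have [_ _ /(_ _ (size_evalR (lam k) c)) memk] := C_components hk.
  have /memk [g ->] : elemR (phi k c) (eta k) \in C by rewrite -Rmul_elemR1_eta // CM.
  by rewrite -dvdp_mod ?p_dvd_modx ?dvdp_mull.
rewrite [c]elemR_decomposition; apply: (big_ind (fun x => x \in C)) => // k _.
exact: elemR_eta_mem (size_evalR _ _) (pc _ (ltn_ord k)).
Qed.

Lemma euclid_pairing_elemR_eta k (f : {poly F}) v : (k < l)%N -> (size f <= s)%N ->
  l%:R * (\sum_(i < s) \sum_(j < l) elemR f (eta k) i j * v i j) =
  dotp s f (phi (kinv k) v).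
Proof.
move=> hk hf; rewrite euclid_pairing (bigD1 (Ordinal hk)) //= big1 => [|j].
  by rewrite phi_elemR_eta // eqxx addr0.
rewrite phi_elemR_eta // -val_eqE /= => /negbTE ->.
by rewrite /dotp big1 // => i _; rewrite coef0 mul0r.
Qed.

Let cofactor_dvd_modx k : (k < l)%N -> m %/ p k %| m.
Proof. by move=> hk; rewrite divp_dvd ?p_dvd_modx. Qed.

Lemma mem_dual_kinv v : v \in dual C <->
  (forall k, (k < l)%N -> recip (m %/ p k) %| phi (kinv k) v).
Proof.
rewrite inE; split => [/forall_inP vC k hk | vC].
  set h := phi (kinv k) v; have hs : (size h <= s)%N := size_evalR _ _.
  rewrite -(dvdp_revn_recip s_gt0 a_sq) ?cofactor_dvd_modx //.
  rewrite -(dvdp_mul2l _ _ (p_neq0 hk)) divpKC ?p_dvd_modx //.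
  apply/modp_eq0P; apply: (@modx_nondeg F s a s_gt0 (p k * revn s h)) => g.
  have gk := size_modp_modx a s_gt0 (g * p k).
  have gkC : elemR ((g * p k) %% m) (eta k) \in C.
    by rewrite elemR_eta_mem // -dvdp_mod ?p_dvd_modx ?dvdp_mull.
  have E : dotp s ((g * p k) %% m) h = 0.
    by rewrite -euclid_pairing_elemR_eta // (eqP (vC _ gkC)) mulr0.
  rewrite (dotp_modx a s_gt0) // in E; apply: etrans _ E.
  by rewrite [in RHS]mulrC modp_mul [in RHS]mulrC -mulrA.
apply/forall_inP => c /mem_code cC.
suff : l%:R * (\sum_(i < s) \sum_(j < l) c i j * v i j) == 0.
  by rewrite mulf_eq0 (negbTE l_neq0).
rewrite euclid_pairing big1 // => k _; have hk := ltn_ord k.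
rewrite (dotp_modx a s_gt0) ?size_evalR // modp_eq0 ?coef0 //.
rewrite -(divpKC (p_dvd_modx hk)) dvdp_mul ?cC //.
by rewrite (dvdp_revn_recip s_gt0 a_sq) ?cofactor_dvd_modx ?size_evalR ?vC.
Qed.

Local Notation q j := (recip (m %/ p (kinv j))).

Let q_dvd_modx j : (j < l)%N -> q j %| m.
Proof. by move=> hj; rewrite (recip_dvdp_modx s_gt0 a_sq) ?cofactor_dvd_modx. Qed.

Lemma mem_dual v : v \in dual C <-> (forall j, (j < l)%N -> q j %| phi j v).
Proof.
rewrite mem_dual_kinv; split => vC j hj; first by rewrite -[X in phi X v](kinv_invol hj) vC.
by rewrite -{1}(kinv_invol hj) vC.
Qed.

Lemma self_dual_eqp : self_dual C <-> (forall j, (j < l)%N -> p j %= q j).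
Proof.
split => [SD j hj | pq].
  have phi_elemR (f : {poly F}) : (size f <= s)%N -> phi j (elemR f (eta j)) = f.
    by move=> hf; rewrite phi_elemR_eta // eqxx.
  apply/andP; split.
    have : elemR (q j %% m) (eta j) \in dual C.
      apply/mem_dual => i hi; rewrite phi_elemR_eta ?size_modp_modx //.
      by case: eqP => [->|_]; rewrite ?dvdp0 // -dvdp_mod ?q_dvd_modx.
    rewrite -SD => /mem_code /(_ _ hj).
    by rewrite phi_elemR ?size_modp_modx // -dvdp_mod ?p_dvd_modx.
  have : elemR (p j %% m) (eta j) \in C.
    by rewrite elemR_eta_mem ?size_modp_modx // -dvdp_mod ?p_dvd_modx.
  rewrite SD => /mem_dual /(_ _ hj).
  by rewrite phi_elemR ?size_modp_modx // -dvdp_mod ?q_dvd_modx.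
apply/setP => v; apply/idP/idP => [/mem_code vC | /mem_dual vC].
  by apply/mem_dual => j hj; rewrite -(eqp_dvdl _ (pq _ hj)) vC.
by apply/mem_code => j hj; rewrite (eqp_dvdl _ (pq _ hj)) vC.
Qed.

Lemma size_p k : (k < l)%N -> (0 < size (p k) <= s.+1)%N.
Proof.
move=> hk; rewrite size_poly_gt0 p_neq0 //= -(size_modx a s_gt0).
by rewrite dvdp_leq ?modx_neq0 ?p_dvd_modx.
Qed.

Lemma size_q j : (j < l)%N -> size (q j) = (s.+1 - (size (p (kinv j))).-1)%N.
Proof.
move=> hj; have hk := kinv_ltl j.
rewrite size_recip ?(coef0_dvdp_modx s_gt0 a_sq) ?cofactor_dvd_modx //.
by rewrite size_divp ?p_neq0 // size_modx.
Qed.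

Lemma eqp_size_sum : (forall j, (j < l)%N -> p j %= q j) ->
  (s * l = 2 * \sum_(j < l) (size (p j)).-1)%N.
Proof.
move=> pq; have kinv_inj : injective (fun k : 'I_l => Ordinal (kinv_ltl k)).
  move=> x y /(congr1 val) /= E; apply: val_inj.
  by rewrite /= -(kinv_invol (ltn_ord x)) E kinv_invol.
rewrite (double_sum_complementary kinv_inj (c := s)) // => k /=.
have := eqp_size (pq _ (ltn_ord k)); rewrite size_q //.
move: (size_p (ltn_ord k)) (size_p (kinv_ltl k)).
by move: (size (p k)) (size (p (kinv k))) => x y; lia.
Qed.

Lemma eqp_recip_cofactor_iff : (forall j, (j < l)%N -> p j %= q j) <->
  (forall k, (k < l)%N -> exists t t' : {poly F},
     [/\ t %% m != 0, t' %% m != 0,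
         recip (m %/ p k) %% m = (t * p (kinv k)) %% m &
         p k %% m = (t' * recip (m %/ p (kinv k))) %% m]).
Proof.
split => [pq k hk | H j hj].
  have /eqpP [[c1 c2] /= /andP [c1_0 c2_0] E1] := pq _ hk.
  have /eqpP [[d1 d2] /= /andP [d1_0 d2_0] E2] := pq _ (kinv_ltl k).
  rewrite kinv_invol // in E2.
  have const_modx (c : F) : c != 0 -> c%:P %% m != 0.
    by move=> c0; rewrite modp_small ?polyC_eq0 // size_modx // size_polyC c0 ltnS.
  exists (d1 / d2)%:P, (c2 / c1)%:P; split; rewrite ?const_modx ?mulf_neq0 ?invr_eq0 //.
    by rewrite mul_polyC mulrC -scalerA E2 scalerA mulVf // scale1r.
  by rewrite mul_polyC mulrC -scalerA -E1 scalerA mulVf // scale1r.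
apply/andP; split.
  have [t [t' [_ _ E _]]] := H _ (kinv_ltl j); rewrite kinv_invol // in E.
  by rewrite (dvdp_mod _ (p_dvd_modx hj)) E -dvdp_mod ?p_dvd_modx // dvdp_mull.
have [t [t' [_ _ _ E]]] := H _ hj.
by rewrite (dvdp_mod _ (q_dvd_modx hj)) E -dvdp_mod ?q_dvd_modx // dvdp_mull.
Qed.

End SelfDualCodes.

Theorem theorem4 (F : finFieldType) (s l r : nat) (a b w : F)
    (C : {set 'M[F]_(s, l)}) (p : nat -> {poly F}) :
  (0 < s)%N -> (0 < l)%N ->
  (a = 1 \/ a = -1) -> (b = 1 \/ b = -1) ->
  r.-primitive_root b ->
  #|F| = 1 %[mod r * l] ->
  (r * l).-primitive_root w -> w ^+ l = b ->
  is_ideal a b C ->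
  (forall j, (j < l)%N ->
     [/\ p j \is monic, p j %| modx s a &
         forall f : {poly F}, (size f <= s)%N ->
           (@elemR F s l a b f (eta_poly l r w j) \in C <->
            exists g : {poly F}, f = (g * p j) %% modx s a)]) ->
  (self_dual C <->
   ((s * l = 2 * \sum_(j < l) (size (p j)).-1)%N /\
    forall k, (k < l)%N ->
      let k' := if b == 1 then ((2 * l - 2 - k) %% l)%N else ((l - 1 - k) %% l)%N in
      exists t t' : {poly F},
        [/\ t %% modx s a != 0, t' %% modx s a != 0,
            recip (modx s a %/ p k) %% modx s a = (t * p k') %% modx s a &
            p k %% modx s a = (t' * recip (modx s a %/ p k')) %% modx s a])).
Proof.
move=> s_gt0 l_gt0 a_pm1 b_pm1 b_prim card_F w_prim wl C_ideal C_components.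
have a_sq : a * a = 1 by case: a_pm1 => ->; rewrite ?mulrNN mulr1.
rewrite (self_dual_eqp s_gt0 l_gt0 a_sq b_pm1 b_prim w_prim wl card_F C_ideal C_components).
have conditions := eqp_recip_cofactor_iff s_gt0 l_gt0 a_sq b_pm1 b_prim w_prim C_components.
split=> [pq | [_ /conditions //]]; split; last exact/conditions.
exact: (eqp_size_sum s_gt0 l_gt0 a_sq b_pm1 b_prim w_prim card_F C_components pq).
Qed.
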